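(* For every integer $n\ge1$ and every $u\in V$, $\Pr(E_{1u})<\dfrac{3}{\ln(n+1)}$.
   Context: For an integer $n\ge1$, the $n$-octahedral graph $G'_n=(V,E')$ is the undirected graph with vertex set $V=\{u\in\mathbb{Z}^3:|u_1|+|u_2|+|u_3|=n\}$ and edge set $E'=\{\{v,w\}\subset V: v\neq w,\ |v_i-w_i|\le 1 \text{ for all } i=1,2,3\}$. For $u,v\in V$, $d_{uv}$ denotes the shortest-path distance in $G'_n$, and $Z_u=\left(\sum_{w\in V\setminus\{u\}} d_{uw}^{-2}\right)^{-1}$. The OSW random graph $G_n=(V,E)$ is the directed graph in which, for every $\{u,v\}\in E'$, both $(u,v),(v,u)\in E$, and in addition each vertex $u\in V$, independently of the others, chooses one vertex $v\in V\setminus\{u\}$ with probability $Z_u d_{uv}^{-2}$ and the long-range edge $(u,v)$ is added; $C_{uv}$ denotes the event that $u$ chooses $v$. For an ordered pair $(x,y)$ of distinct vertices, say $(x,y)$ is of type $s$ if $\{x,y\}\in E'$, and of type $w$ if $d_{xy}\ge2$ and $C_{xy}$ occurs. A C3 rooted at $u$ of type $(t_1,t_2,t_3)\in\{s,w\}^3$ is a triple $(u,a,b)$ of pairwise distinct vertices such that $(u,a)$ is of type $t_1$, $(a,b)$ is of type $t_2$ and $(b,u)$ is of type $t_3$. $E_{1u}$ is the event that there exists a C3 rooted at $u$ of type $(s,s,w)$. *)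

From Stdlib Require Import ZArith Reals.
From HB Require Import structures.
From mathcomp Require Import all_boot.

Set Implicit Arguments.
Unset Strict Implicit.
Unset Printing Implicit Defensive.

(* Points of the cube [-n,n]^3, coordinate i : 'I_(2n+1) encodes i - n. *)
Definition cube (n : nat) := ('I_(2 * n + 1) * 'I_(2 * n + 1) * 'I_(2 * n + 1))%type.

Definition zc (n : nat) (i : 'I_(2 * n + 1)) : Z := (Z.of_nat i - Z.of_nat n)%Z.

Definition c1 n (x : cube n) : Z := zc x.1.1.
Definition c2 n (x : cube n) : Z := zc x.1.2.
Definition c3 n (x : cube n) : Z := zc x.2.

Definition on_oct (n : nat) (x : cube n) : bool :=
  Z.eqb (Z.abs (c1 x) + Z.abs (c2 x) + Z.abs (c3 x)) (Z.of_nat n).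

Definition V (n : nat) : finType := {x : cube n | on_oct x}.

Definition vc1 n (u : V n) : Z := c1 (val u).
Definition vc2 n (u : V n) : Z := c2 (val u).
Definition vc3 n (u : V n) : Z := c3 (val u).

Definition adj (n : nat) (v w : V n) : bool :=
  [&& v != w,
      Z.leb (Z.abs (vc1 v - vc1 w)) 1,
      Z.leb (Z.abs (vc2 v - vc2 w)) 1 &
      Z.leb (Z.abs (vc3 v - vc3 w)) 1].

Fixpoint ball (n : nat) (k : nat) (u : V n) : {set V n} :=
  match k with
  | 0 => [set u]
  | k'.+1 => ball k' u :|: [set w | [exists x in ball k' u, adj x w]]
  end.

(* Shortest-path distance d_{uv}: least k with v in ball k u
   (G'_n is connected, so some k < #|V| works). *)
Definition dist (n : nat) (u v : V n) : nat :=
  find (fun k => v \in ball k u) (iota 0 #|V n|.+1).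

Definition Zn (n : nat) (u : V n) : R :=
  Rinv (\big[Rplus/R0]_(w : V n | w != u) Rinv (INR (dist u w) ^ 2)).

Definition pchoose (n : nat) (u v : V n) : R :=
  if v == u then R0 else Rmult (Zn u) (Rinv (INR (dist u v) ^ 2)).

(* An outcome of the long-range choices is f : V -> V (f u = the vertex chosen
   by u); independent choices give the product weight. *)
Definition weight (n : nat) (f : {ffun V n -> V n}) : R :=
  \big[Rmult/R1]_(x : V n) pchoose x (f x).

Definition Pr (n : nat) (E : pred {ffun V n -> V n}) : R :=
  \big[Rplus/R0]_(f : {ffun V n -> V n} | E f) weight f.

(* Pair types. C_{xy} occurs in outcome f iff f x = y. *)
Definition type_s (n : nat) (x y : V n) : bool := adj x y.
Definition type_w (n : nat) (f : {ffun V n -> V n}) (x y : V n) : bool :=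
  (2 <= dist x y) && (f x == y).

Definition E1u (n : nat) (u : V n) : pred {ffun V n -> V n} :=
  fun f => [exists a : V n, exists b : V n,
    [&& u != a, a != b, u != b, type_s u a, type_s a b & type_w f b u]].

(* A C3 of type (s, s, w) rooted at [u] ends with a vertex [b] two short edges
   away from [u], at distance at least 2, which chooses [u]. There are at most 12
   such [b]: only the position of [u] relative to the coordinate planes, capped
   at 2, matters, which leaves a finite check. Each [b] chooses [u] with
   probability [Z_b / d^2 <= Z_b / 4], and [1 / Z_b >= ln (n + 1) + 1]: in each
   of the three sectors around [b] the [k]-th shell contributes [k + 1] distinct
   vertices at distance at most [k], and [sum_(k <= P) (k + 1) / k^2 >=
   ln (P + 1) + 1]. Hence [Pr(E_1u) <= 12 / (4 (ln (n + 1) + 1)) < 3 / ln (n + 1)]. *)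

From Pilot Require Import Defs.
From Stdlib Require Import Reals Lra Lia ZArith.
From HB Require Import structures.
From mathcomp Require Import all_boot zify.

(* Stdlib's [Reals] also defines [dist] and [c1]. *)
Import Defs.

Set Implicit Arguments.
Unset Strict Implicit.
Unset Printing Implicit Defensive.

Lemma vc_abs_sum n (v : V n) :
  (Z.abs (vc1 v) + Z.abs (vc2 v) + Z.abs (vc3 v) = Z.of_nat n)%Z.
Proof. by have /Z.eqb_eq := valP v. Qed.

Definition vc n (v : V n) : Z * Z * Z := (vc1 v, vc2 v, vc3 v).

Lemma vc_inj n : injective (@vc n).
Proof.
case=> [[[a b] c] ?] [[[a' b'] c'] ?].
rewrite /vc /vc1 /vc2 /vc3 /c1 /c2 /c3 /zc /= => -[e1 e2 e3]; apply: val_inj => /=.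
by congr (_, _, _); apply: ord_inj; lia.
Qed.

Definition ord_of_Z n (x : Z) : option 'I_(2 * n + 1) :=
  insub (Z.to_nat (x + Z.of_nat n)).

(* Falls back to [d] when [p] is not on the octahedron. *)
Definition vertex_of n (d : V n) (p : Z * Z * Z) : V n :=
  if (ord_of_Z n p.1.1, ord_of_Z n p.1.2, ord_of_Z n p.2) is (Some a, Some b, Some c)
  then odflt d (insub (a, b, c)) else d.

Lemma ord_of_ZP n x : (Z.abs x <= Z.of_nat n)%Z ->
  exists2 a, ord_of_Z n x = Some a & zc a = x.
Proof.
move=> hx; rewrite /ord_of_Z; case: insubP => [a _ ea|/negP[]].
  by exists a; rewrite // /zc ea; lia.
by apply/ltP; lia.
Qed.

Lemma vc_vertex_of n (d : V n) (p : Z * Z * Z) :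
  (Z.abs p.1.1 + Z.abs p.1.2 + Z.abs p.2 = Z.of_nat n)%Z -> vc (vertex_of d p) = p.
Proof.
case: p => [[x y] z] /= hxyz; rewrite /vertex_of /=.
have [a -> ea] := @ord_of_ZP n x ltac:(lia).
have [b -> eb] := @ord_of_ZP n y ltac:(lia).
have [c -> ec] := @ord_of_ZP n z ltac:(lia).
case: insubP => [v _ ev|/negP[]] /=.
  by rewrite /vc /vc1 /vc2 /vc3 ev /c1 /c2 /c3 /= ea eb ec.
by apply/Z.eqb_eq; rewrite /c1 /c2 /c3 /= ea eb ec.
Qed.

Lemma card_V_gt n (u : V n) : (n < #|V n|)%N.
Proof.
pose f (i : 'I_n.+1) := vertex_of u (Z.of_nat i, Z.of_nat n - Z.of_nat i, 0)%Z.
suff /leq_card : injective f by rewrite card_ord.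
move=> i j /(congr1 (@vc n)); rewrite !vc_vertex_of /=; last 2 first.
- by have := ltn_ord j; lia.
- by have := ltn_ord i; lia.
by case=> eij _; apply: ord_inj; lia.
Qed.

Lemma adjP n (v w : V n) :
  reflect [/\ v <> w, (Z.abs (vc1 v - vc1 w) <= 1)%Z,
              (Z.abs (vc2 v - vc2 w) <= 1)%Z & (Z.abs (vc3 v - vc3 w) <= 1)%Z]
          (adj v w).
Proof.
by apply: (iffP and4P) => -[/eqP ? /Z.leb_le ? /Z.leb_le ? /Z.leb_le ?].
Qed.

Lemma ball_adj n (u v w : V n) k :
  v \in ball k u -> adj v w -> w \in ball k.+1 u.
Proof.
move=> hv hvw; rewrite inE; apply/orP; right.
by rewrite inE; apply/existsP; exists v; rewrite hv.
Qed.

Lemma dist_le_ball n (u v : V n) k :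
  v \in ball k u -> (k <= #|V n|)%N -> (dist u v <= k)%N.
Proof.
move=> hv hk; rewrite /dist leqNgt; apply/negP => /(before_find 0%N).
by rewrite nth_iota ?add0n ?hv.
Qed.

Lemma dist_gt0 n (u v : V n) : v != u -> (0 < dist u v)%N.
Proof.
move=> hvu; rewrite lt0n; apply: contra hvu => /eqP d0.
have hfind : has (fun k => v \in ball k u) (iota 0 #|V n|.+1).
  by rewrite has_find -/(dist u v) d0.
by have := nth_find 0%N hfind; rewrite -/(dist u v) d0 /= inE.
Qed.

Lemma adj_of_vc n (v w : V n) (p q : Z * Z * Z) : vc v = p -> vc w = q ->
  (p.1.1 <> q.1.1 \/ p.1.2 <> q.1.2 \/ p.2 <> q.2) ->
  (Z.abs (p.1.1 - q.1.1) <= 1)%Z -> (Z.abs (p.1.2 - q.1.2) <= 1)%Z ->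
  (Z.abs (p.2 - q.2) <= 1)%Z -> adj v w.
Proof.
move=> <- <- hne h1 h2 h3; apply/adjP; split=> // evw.
by move: hne; rewrite evw; lia.
Qed.

Definition outward (t : Z) : Z := if (t <? 0)%Z then (-1)%Z else 1%Z.

Section Sectors.
Variables (n : nat) (b : V n).
Local Notation x := (vc1 b).
Local Notation y := (vc2 b).
Local Notation z := (vc3 b).

(* In sector [s], coordinate [s] moves [k] towards 0 while the two others move
   outwards by [i] and [k - i]: for [k <= |b_s|] the l1 norm is unchanged, and
   [k] can be increased by one along an edge. *)
Definition sector_shift (s k i : nat) : Z * Z * Z :=
  let K := Z.of_nat k in let I := Z.of_nat i in
  match s with
  | 0 => (x - outward x * K, y + outward y * I, z + outward z * (K - I))%Z
  | 1 => (x + outward x * (K - I), y - outward y * K, z + outward z * I)%Z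
  | _ => (x + outward x * I, y + outward y * (K - I), z - outward z * K)%Z
  end.

Definition sector_size (s : nat) : nat :=
  Z.abs_nat (match s with 0 => x | 1 => y | _ => z end).

Definition sector_vertex (s k i : nat) : V n := vertex_of b (sector_shift s k i).

Ltac outward_cases := rewrite /outward; case: (Z.ltb_spec x 0);
  case: (Z.ltb_spec y 0); case: (Z.ltb_spec z 0); intros; lia.

Lemma sector_sizes_sum : (sector_size 0 + sector_size 1 + sector_size 2)%N = n.
Proof. by have := vc_abs_sum b; rewrite /sector_size; lia. Qed.

Lemma vc_sector_vertex s k i : (i <= k)%N -> (k <= sector_size s)%N ->
  vc (sector_vertex s k i) = sector_shift s k i.
Proof.
move=> hik hk; apply: vc_vertex_of.
have := vc_abs_sum b; move: hk; rewrite /sector_shift /sector_size.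
by case: s => [|[|s]] /=; outward_cases.
Qed.

Lemma sector_vertex_ball s k i : (i <= k)%N -> (k <= sector_size s)%N ->
  sector_vertex s k i \in ball k b.
Proof.
elim: k i => [|k IH] i hik hk.
  have -> : i = 0%N by lia.
  rewrite inE; apply/eqP/vc_inj; rewrite vc_sector_vertex //.
  by rewrite /vc /sector_shift; case: s {hk} => [|[|s]] /=; congr (_, _, _); lia.
(* The predecessor of [(k + 1, i)] is [(k, i - 1)], truncated to [(k, 0)]. *)
have hi' : (i - 1 <= k)%N by lia.
have hk' : (k <= sector_size s)%N by lia.
apply: (ball_adj (IH _ hi' hk')).
apply: (adj_of_vc (vc_sector_vertex hi' hk') (vc_sector_vertex hik hk));
  rewrite /sector_shift Nat2Z.inj_succ;
  by case: s {IH hk hk'} => [|[|s]] /=; outward_cases.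
Qed.

Definition sector_index (t : 'I_3 * ('I_n.+1 * 'I_n.+1)) : bool :=
  let: (s, (k, i)) := t in [&& (0 < k)%N, (k <= sector_size s)%N & (i <= k)%N].

Definition sector_point (t : 'I_3 * ('I_n.+1 * 'I_n.+1)) : V n :=
  let: (s, (k, i)) := t in sector_vertex s k i.

Lemma sector_point_neq t : sector_index t -> sector_point t != b.
Proof.
case: t => s [k i] /and3P[k_gt0 hk hi]; apply/eqP => /(congr1 (@vc n)).
rewrite vc_sector_vertex //; move: hk; rewrite /sector_size /sector_shift /vc.
by case: s => [[|[|[|s]]] ?] //= hk []; outward_cases.
Qed.

Lemma sector_point_inj : {in sector_index &, injective sector_point}.
Proof.
move=> [s1 [k1 i1]] [s2 [k2 i2]] /and3P[k1_gt0 hk1 hi1] /and3P[k2_gt0 hk2 hi2].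
move=> /(congr1 (@vc n)); rewrite !vc_sector_vertex // => e.
suff [es [ek ei]] : s1 = s2 :> nat /\ k1 = k2 :> nat /\ i1 = i2 :> nat.
  by congr (_, (_, _)); apply: val_inj.
move: hk1 hk2 e; rewrite /sector_size /sector_shift.
by case: s1 s2 => [[|[|[|s1]]] ?] [[|[|[|s2]]] ?] //= ? ? []; outward_cases.
Qed.

Lemma dist_sector_point s k i : sector_index (s, (k, i)) ->
  (dist b (sector_point (s, (k, i))) <= k)%N.
Proof.
case/and3P=> _ hk hi.
apply: dist_le_ball; first exact: sector_vertex_ball.
by have := card_V_gt b; have := ltn_ord k; lia.
Qed.

End Sectors.

Lemma Z_eqbP : Equality.axiom Z.eqb.
Proof. by move=> x y; apply: (iffP idP) => /Z.eqb_eq. Qed.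
HB.instance Definition _ := hasDecEq.Build Z Z_eqbP.

Definition two_hop_far n (u : V n) : {set V n} :=
  [set b | [exists a, [&& u != a, a != b, u != b, adj u a & adj a b]]
           && (2 <= dist b u)%N].

Definition zrange (m : nat) : seq Z :=
  [seq Z.of_nat i - Z.of_nat m | i <- iota 0 (2 * m).+1]%Z.

Definition grid3 (l : seq Z) : seq (Z * Z * Z) :=
  [seq (p, z) | p <- [seq (x, y) | x <- l, y <- l], z <- l].

Lemma mem_zrange m t : (Z.abs t <= Z.of_nat m)%Z -> t \in zrange m.
Proof.
move=> tm; apply/mapP; exists (Z.to_nat (t + Z.of_nat m)); last by lia.
by rewrite mem_iota; apply/andP; split; lia.
Qed.

Lemma mem_grid3 l x y z : x \in l -> y \in l -> z \in l -> (x, y, z) \in grid3 l.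
Proof. by move=> xl yl zl; apply: allpairs_f => //; apply: allpairs_f. Qed.

Definition keeps_norm (c d : Z * Z * Z) : bool :=
  Z.eqb (Z.abs (c.1.1 + d.1.1) + Z.abs (c.1.2 + d.1.2) + Z.abs (c.2 + d.2))
        (Z.abs c.1.1 + Z.abs c.1.2 + Z.abs c.2).

Definition unit_move (d : Z * Z * Z) : bool :=
  [&& Z.abs d.1.1 <=? 1, Z.abs d.1.2 <=? 1 & Z.abs d.2 <=? 1]%Z.

Definition two_hop_move (c d : Z * Z * Z) : bool :=
  [&& keeps_norm c d, ~~ unit_move d &
      has (fun a => keeps_norm c a &&
                    unit_move (d.1.1 - a.1.1, d.1.2 - a.1.2, d.2 - a.2)%Z)
          (grid3 (zrange 1))].

(* [clip] only forgets distances to the coordinate planes beyond 2, which two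
   short edges cannot cross. *)

Definition clip (t : Z) : Z := Z.max (-2) (Z.min 2 t).

Lemma clip_abs_shift t d : (Z.abs d <= 2)%Z ->
  (Z.abs (clip t + d) - Z.abs (clip t) = Z.abs (t + d) - Z.abs t)%Z.
Proof. by rewrite /clip; lia. Qed.

Lemma count_two_hop_move :
  all (fun c => count (two_hop_move c) (grid3 (zrange 2)) <= 12)%N (grid3 (zrange 2)).
Proof. by vm_compute. Qed.

Definition offset n (u v : V n) : Z * Z * Z :=
  (vc1 v - vc1 u, vc2 v - vc2 u, vc3 v - vc3 u)%Z.

Definition clip3 n (u : V n) : Z * Z * Z := (clip (vc1 u), clip (vc2 u), clip (vc3 u)).

Lemma keeps_norm_offset n (u v : V n) :
  (Z.abs (vc1 v - vc1 u) <= 2)%Z -> (Z.abs (vc2 v - vc2 u) <= 2)%Z ->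
  (Z.abs (vc3 v - vc3 u) <= 2)%Z -> keeps_norm (clip3 u) (offset u v).
Proof.
move=> h1 h2 h3; apply/Z.eqb_eq; rewrite /=.
suff: (Z.abs (clip (vc1 u) + (vc1 v - vc1 u)) - Z.abs (clip (vc1 u)) +
       (Z.abs (clip (vc2 u) + (vc2 v - vc2 u)) - Z.abs (clip (vc2 u))) +
       (Z.abs (clip (vc3 u) + (vc3 v - vc3 u)) - Z.abs (clip (vc3 u))) = 0)%Z by lia.
rewrite !clip_abs_shift // !Zplus_minus.
by have := vc_abs_sum u; have := vc_abs_sum v; lia.
Qed.

Lemma two_hop_far_near n (u b : V n) : b \in two_hop_far u ->
  [/\ Z.abs (vc1 b - vc1 u) <= 2, Z.abs (vc2 b - vc2 u) <= 2
    & Z.abs (vc3 b - vc3 u) <= 2]%Z.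
Proof.
rewrite inE => /andP[/existsP[a /and5P[_ _ _ /adjP[_ a1 a2 a3] /adjP[_ b1 b2 b3]]] _].
by split; [clear -a1 b1 | clear -a2 b2 | clear -a3 b3]; lia.
Qed.

Lemma two_hop_far_move n (u b : V n) :
  b \in two_hop_far u -> two_hop_move (clip3 u) (offset u b).
Proof.
move=> hb; have [d1 d2 d3] := two_hop_far_near hb; move: hb.
rewrite inE => /andP[/existsP[a /and5P[_ _ ub /adjP[_ a1 a2 a3] /adjP[_ b1 b2 b3]]] far].
apply/and3P; split; first exact: keeps_norm_offset.
- apply: contraTN far => /and3P[/Z.leb_le e1 /Z.leb_le e2 /Z.leb_le e3].
  have bu : adj b u by apply/adjP; split=> // eb; rewrite eb eqxx in ub.
  have u_ball : u \in ball 1 b by apply: ball_adj bu; rewrite inE.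
  by have := dist_le_ball u_ball; have := card_V_gt u; lia.
apply/hasP; exists (offset u a).
  by apply: mem_grid3; apply: mem_zrange; [clear -a1 | clear -a2 | clear -a3]; lia.
apply/andP; split.
  by apply: keeps_norm_offset; [clear -a1 | clear -a2 | clear -a3]; lia.
by apply/and3P; split; apply/Z.leb_le => /=; [clear -b1 | clear -b2 | clear -b3]; lia.
Qed.

Lemma card_two_hop_far n (u : V n) : (#|two_hop_far u| <= 12)%N.
Proof.
have cu : clip3 u \in grid3 (zrange 2).
  by apply: mem_grid3; apply: mem_zrange; rewrite /clip; lia.
apply: leq_trans (allP count_two_hop_move _ cu).
rewrite -size_filter cardE -(size_map (offset u)); apply: uniq_leq_size.
  rewrite map_inj_in_uniq ?enum_uniq // => b1 b2 _ _ [e1 e2 e3].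
  by apply: vc_inj; rewrite /vc; congr (_, _, _); lia.
move=> d /mapP[b]; rewrite mem_enum => hb ->.
rewrite mem_filter two_hop_far_move //.
by have [? ? ?] := two_hop_far_near hb; apply: mem_grid3; apply: mem_zrange.
Qed.

Local Open Scope R_scope.

HB.instance Definition _ := Monoid.isComLaw.Build R R0 Rplus
  (fun x y z => esym (Rplus_assoc x y z)) Rplus_comm Rplus_0_l.
HB.instance Definition _ := Monoid.isComLaw.Build R R1 Rmult
  (fun x y z => esym (Rmult_assoc x y z)) Rmult_comm Rmult_1_l.
HB.instance Definition _ := Monoid.isMulLaw.Build R R0 Rmult Rmult_0_l Rmult_0_r.
HB.instance Definition _ :=
  Monoid.isAddLaw.Build R Rmult Rplus Rmult_plus_distr_r Rmult_plus_distr_l.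

Lemma Rsum_le (I : Type) (r : seq I) (P : pred I) (F G : I -> R) :
  (forall i, P i -> F i <= G i) ->
  \big[Rplus/R0]_(i <- r | P i) F i <= \big[Rplus/R0]_(i <- r | P i) G i.
Proof. by move=> FG; apply: (big_ind2 Rle) => // *; lra. Qed.

Lemma Rsum_ge0 (I : Type) (r : seq I) (P : pred I) (F : I -> R) :
  (forall i, P i -> 0 <= F i) -> 0 <= \big[Rplus/R0]_(i <- r | P i) F i.
Proof. by move=> F0; apply: (big_ind (Rle 0)) => // *; lra. Qed.

Lemma Rprod_ge0 (I : Type) (r : seq I) (P : pred I) (F : I -> R) :
  (forall i, P i -> 0 <= F i) -> 0 <= \big[Rmult/R1]_(i <- r | P i) F i.
Proof. by move=> F0; apply: (big_ind (Rle 0)) => // *; nra. Qed.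

Lemma Rsum_le_sub (I : finType) (P Q : pred I) (F : I -> R) :
  subpred Q P -> (forall i, P i -> 0 <= F i) ->
  \big[Rplus/R0]_(i | Q i) F i <= \big[Rplus/R0]_(i | P i) F i.
Proof.
move=> QP F0; rewrite [X in X <= _]big_mkcond [X in _ <= X]big_mkcond.
apply: Rsum_le => i _; case: ifP => [/QP -> | _]; first lra.
by case: ifP => [/F0|]; lra.
Qed.

Lemma iter_Rplus m c : iter m (Rplus c) 0 = INR m * c.
Proof. by elim: m => [|m IH]; rewrite ?S_INR /= ?IH; ring. Qed.

Lemma Rsum_const (I : finType) (A : pred I) (c : R) :
  \big[Rplus/R0]_(i in A) c = INR #|A| * c.
Proof. by rewrite big_const iter_Rplus. Qed.

Lemma Rsum_const_ord m (c : R) : \big[Rplus/R0]_(i < m) c = INR m * c.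
Proof. by rewrite big_const_ord iter_Rplus. Qed.

Lemma Rinv_ge0 r : 0 <= r -> 0 <= / r.
Proof.
case=> [r_gt0|<-]; last by rewrite Rinv_0; lra.
by apply: Rlt_le; apply: Rinv_0_lt_compat.
Qed.

Lemma ln_le x y : 0 < x -> x <= y -> ln x <= ln y.
Proof. by move=> x_gt0 [xy|<-]; [apply/Rlt_le/ln_increasing | lra]. Qed.

Lemma ln_INR_succ_ge0 n : 0 <= ln (INR n + 1).
Proof. by rewrite -ln_1; apply: ln_le; have := pos_INR n; lra. Qed.

Lemma ln_succ_le a : 0 < a -> ln (a + 1) <= ln a + / a.
Proof.
move=> a_gt0; have ia_gt0 : 0 < / a by apply: Rinv_0_lt_compat.
have -> : a + 1 = a * (1 + / a) by field; lra.
rewrite ln_mult; try lra; apply: Rplus_le_compat_l.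
by rewrite -{2}(ln_exp (/ a)); apply: ln_le; [lra | apply: exp_ineq1_le].
Qed.

Definition sector_sum (P : nat) : R :=
  \big[Rplus/R0]_(1 <= k < P.+1) (INR k.+1 / INR k ^ 2).

Lemma sector_sumS P : sector_sum P.+1 = sector_sum P + INR P.+2 / INR P.+1 ^ 2.
Proof. by rewrite /sector_sum big_nat_recr. Qed.

Lemma sector_sum_ge P : (0 < P)%N -> ln (INR P + 1) + 1 <= sector_sum P.
Proof.
elim: P => [//|[_ _|P IH _]].
  rewrite sector_sumS /sector_sum big_geq //= Rplus_0_l.
  by have := ln_succ_le Rlt_0_1; rewrite ln_1; lra.
have := IH isT; rewrite [sector_sum P.+2]sector_sumS !S_INR.
have x_gt0 : 0 < INR P + 1 + 1 by have := pos_INR P; lra.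
have := ln_succ_le x_gt0.
have -> : (INR P + 1 + 1 + 1) / (INR P + 1 + 1) ^ 2 =
          / (INR P + 1 + 1) + / (INR P + 1 + 1) ^ 2 by field; lra.
have : 0 < / (INR P + 1 + 1) ^ 2 by apply/Rinv_0_lt_compat/pow_lt.
lra.
Qed.

Lemma ln_le_sector_sum P : ln (INR P + 1) <= sector_sum P.
Proof.
case: P => [|P]; last by have := sector_sum_ge (ltn0Sn P); lra.
by rewrite /sector_sum big_geq //= Rplus_0_l ln_1; lra.
Qed.

Lemma sector_sum3_ge a b c : (0 < a + b + c)%N ->
  ln (INR (a + b + c) + 1) + 1 <= sector_sum a + sector_sum b + sector_sum c.
Proof.
move=> abc_gt0.
have := pos_INR a; have := pos_INR b; have := pos_INR c => c0 b0 a0.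
have : ln (INR (a + b + c) + 1) <= ln (INR a + 1) + ln (INR b + 1) + ln (INR c + 1).
  rewrite -!ln_mult ?plus_INR; try nra; apply: ln_le; first lra.
  have := Rmult_le_pos _ _ a0 b0; have := Rmult_le_pos _ _ b0 c0.
  have := Rmult_le_pos _ _ a0 c0; have := Rmult_le_pos _ _ (Rmult_le_pos _ _ a0 b0) c0.
  nra.
have := ln_le_sector_sum a; have := ln_le_sector_sum b; have := ln_le_sector_sum c.
case: (posnP a) => [a0'|a_gt0]; last by have := sector_sum_ge a_gt0; lra.
case: (posnP b) => [b0'|b_gt0]; last by have := sector_sum_ge b_gt0; lra.
case: (posnP c) => [c0'|c_gt0]; last by have := sector_sum_ge c_gt0; lra.
by move: abc_gt0; rewrite a0' b0' c0'.
Qed.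

Lemma triple_bigA (T : Type) (idx : T) (op : Monoid.com_law idx) (I J K : finType)
    (F : I -> J -> K -> T) :
  \big[op/idx]_i \big[op/idx]_j \big[op/idx]_k F i j k =
  \big[op/idx]_(t : I * (J * K)) F t.1 t.2.1 t.2.2.
Proof.
rewrite -(pair_bigA _ (fun i q => F i q.1 q.2)).
by apply: eq_bigr => i _; apply: pair_bigA.
Qed.

Lemma Rsum_ord_leq N k (c : R) : (k <= N)%N ->
  \big[Rplus/R0]_(i < N.+1) (if (i <= k)%N then c else 0) = INR k.+1 * c.
Proof.
move=> kN; rewrite -big_mkcond -Rsum_const_ord.
by rewrite (big_ord_widen N.+1 (fun=> c)).
Qed.

Lemma sector_sum_ord N P : (P <= N)%N ->
  \big[Rplus/R0]_(k < N.+1) \big[Rplus/R0]_(i < N.+1)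
    (if [&& (0 < k)%N, (k <= P)%N & (i <= k)%N] then / INR k ^ 2 else 0)
  = sector_sum P.
Proof.
move=> PN; rewrite /sector_sum (big_nat_widenl _ 0) // (big_nat_widen _ _ N.+1) //.
rewrite big_mkord [RHS]big_mkcond; apply: eq_bigr => k _; rewrite /= ltnS.
case: ifP => [/andP[k_gt0 kP] | kP]; last by apply: big1 => i _; rewrite andbA kP.
rewrite /Rdiv -(Rsum_ord_leq _ (leq_trans kP PN)).
by apply: eq_bigr => i _; rewrite k_gt0 kP.
Qed.

Definition inv_dist_sum n (b : V n) : R :=
  \big[Rplus/R0]_(w : V n | w != b) / INR (dist b w) ^ 2.

Section InvDistSum.
Variables (n : nat) (b : V n).

Lemma sum_sector_index :
  \big[Rplus/R0]_(t | sector_index b t) / INR t.2.1 ^ 2 =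
  sector_sum (sector_size b 0) + sector_sum (sector_size b 1)
  + sector_sum (sector_size b 2).
Proof.
have sector_term (s : 'I_3) :
    \big[Rplus/R0]_(k < n.+1) \big[Rplus/R0]_(i < n.+1)
      (if sector_index b (s, (k, i)) then / INR k ^ 2 else 0) =
    sector_sum (sector_size b s).
  by apply: sector_sum_ord; have := sector_sizes_sum b; case: s => [[|[|[|s]]] ?] /=; lia.
transitivity (\big[Rplus/R0]_(s < 3) \big[Rplus/R0]_(k < n.+1)
    \big[Rplus/R0]_(i < n.+1) (if sector_index b (s, (k, i)) then / INR k ^ 2 else 0)).
  by rewrite big_mkcond triple_bigA; apply: eq_bigr => -[s [k i]].
rewrite (eq_bigr _ (fun s _ => sector_term s)).
by rewrite !big_ord_recl big_ord0 /= -[bump 0 0]/1%N -[bump 0 1]/2%N; ring.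
Qed.

Lemma inv_dist_sum_ge : (0 < n)%N -> ln (INR n + 1) + 1 <= inv_dist_sum b.
Proof.
move=> n_gt0.
have := @sector_sum3_ge (sector_size b 0) (sector_size b 1) (sector_size b 2).
rewrite sector_sizes_sum -sum_sector_index => /(_ n_gt0) /Rle_trans; apply.
pose I := [set t | sector_index b t].
have far_le_near : \big[Rplus/R0]_(t in I) / INR t.2.1 ^ 2 <=
                   \big[Rplus/R0]_(t in I) / INR (dist b (sector_point b t)) ^ 2.
  apply: Rsum_le => -[s [k i]]; rewrite /I inE => ht.
  have d_gt0 := dist_gt0 (sector_point_neq ht).
  apply: Rinv_le_contravar; first by apply/pow_lt/lt_0_INR/ltP.
  by apply: pow_incr; split; [apply: pos_INR | apply/le_INR/leP/dist_sector_point].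
have near_le : \big[Rplus/R0]_(w in sector_point b @: I) / INR (dist b w) ^ 2 <=
               inv_dist_sum b.
  apply: Rsum_le_sub => [w /imsetP[t] | w _]; last by apply/Rinv_ge0/pow2_ge_0.
  by rewrite /I inE => ht ->; apply: sector_point_neq.
rewrite big_imset /= in near_le; last first.
  by move=> t1 t2; rewrite /I !inE; apply: sector_point_inj.
rewrite (eq_bigl (fun t => t \in I)) => [|t]; last by rewrite /I inE.
exact: Rle_trans far_le_near near_le.
Qed.
End InvDistSum.

Lemma pchoose_ge0 n (x y : V n) : 0 <= pchoose x y.
Proof.
rewrite /pchoose; case: eqP => _; first lra.
apply: Rmult_le_pos; apply: Rinv_ge0; last exact: pow2_ge_0.
by apply: Rsum_ge0 => w _; apply/Rinv_ge0/pow2_ge_0.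
Qed.

Lemma weight_ge0 n (f : {ffun V n -> V n}) : 0 <= weight f.
Proof. by apply: Rprod_ge0 => x _; apply: pchoose_ge0. Qed.

Lemma pchoose_sum1 n (x : V n) :
  (0 < n)%N -> \big[Rplus/R0]_(y : V n) pchoose x y = 1.
Proof.
move=> n_gt0; have S_gt0 : 0 < inv_dist_sum x.
  by have := inv_dist_sum_ge x n_gt0; have := ln_INR_succ_ge0 n; lra.
rewrite (eq_bigr (fun y => if y != x then Zn x * / INR (dist x y) ^ 2 else 0)).
  by rewrite -big_mkcond -big_distrr /=; change (/ inv_dist_sum x * inv_dist_sum x = 1);
    field; lra.
by move=> y _; rewrite /pchoose; case: eqP.
Qed.

Lemma sum_weight_choose n (b y : V n) : (0 < n)%N ->
  \big[Rplus/R0]_(f : {ffun V n -> V n}) (if f b == y then weight f else 0) = pchoose b y.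
Proof.
move=> n_gt0.
pose F (x z : V n) :=
  if x == b then (if z == y then pchoose b y else 0) else pchoose x z.
transitivity (\big[Rmult/R1]_(x : V n) \big[Rplus/R0]_(z : V n) F x z).
  rewrite bigA_distr_bigA; apply: eq_bigr => f _.
  rewrite /weight [RHS](bigD1 b) // [X in if _ then X else _](bigD1 b) // /F eqxx.
  case: eqP => [->|_]; last by symmetry; apply: Rmult_0_l.
  by congr (_ * _); apply: eq_bigr => x /andP[_ /negbTE ->].
rewrite (bigD1 b) //= [X in _ * X]big1 => [|x /negbTE xb].
  by rewrite /F eqxx -big_mkcond big_pred1_eq Rmult_1_r.
by rewrite /F xb pchoose_sum1.
Qed.

Lemma Pr_E1u_le n (u : V n) : (0 < n)%N ->
  Pr (E1u u) <= \big[Rplus/R0]_(b in two_hop_far u) pchoose b u.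
Proof.
move=> n_gt0.
under [X in _ <= X]eq_bigr => b _ do rewrite -(sum_weight_choose b u n_gt0).
rewrite exchange_big /Pr big_mkcond /=; apply: Rsum_le => f _.
have rest_ge0 (P : pred (V n)) :
    0 <= \big[Rplus/R0]_(b | P b) (if f b == u then weight f else 0).
  by apply: Rsum_ge0 => b _; case: ifP => _; [apply: weight_ge0 | lra].
case: ifP => [/existsP[a /existsP[b]] | _]; last exact: rest_ge0.
case/and3P=> ua ab /and4P[ub ss_ua ss_ab /andP[far /eqP fb]].
have b_far : b \in two_hop_far u.
  by rewrite inE far andbT; apply/existsP; exists a; apply/and5P.
rewrite (bigD1 b) //= fb eqxx -[X in X <= _]Rplus_0_r.
by apply/Rplus_le_compat_l/rest_ge0.
Qed.

Lemma pchoose_far_le n (b u : V n) : (0 < n)%N -> (2 <= dist b u)%N ->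
  pchoose b u <= / 4 * / (ln (INR n + 1) + 1).
Proof.
move=> n_gt0 far.
have L_ge0 := ln_INR_succ_ge0 n; have S_ge := inv_dist_sum_ge b n_gt0.
rewrite /pchoose; case: eqP => _.
  by apply: Rmult_le_pos; apply: Rinv_ge0; lra.
rewrite /Zn -/(inv_dist_sum b) Rmult_comm.
have d_ge2 : 2 <= INR (dist b u) by apply: (le_INR 2); apply/leP.
apply: Rmult_le_compat; try (apply: Rinv_ge0; nra).
  by apply: Rinv_le_contravar; nra.
by apply: Rinv_le_contravar; lra.
Qed.

Theorem lemma5 (n : nat) (u : V n) :
  (1 <= n)%N -> Rlt (Pr (E1u u)) (Rdiv (IZR 3) (ln (Rplus (INR n) R1))).
Proof.
move=> n_gt0; set L := ln (INR n + 1).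
have L_gt0 : 0 < L.
  rewrite /L -ln_1; apply: ln_increasing; first lra.
  by have := le_INR 1 n (elimT leP n_gt0); simpl; lra.
have card_le : INR #|two_hop_far u| <= 12.
  by have := le_INR _ 12 (elimT leP (card_two_hop_far u)); simpl; lra.
apply: Rle_lt_trans (Pr_E1u_le u n_gt0) _.
apply: (Rle_lt_trans _ (\big[Rplus/R0]_(b in two_hop_far u) (/ 4 * / (L + 1)))).
  apply: Rsum_le => b; rewrite inE => /andP[_ far]; exact: pchoose_far_le.
rewrite Rsum_const; have : / (L + 1) < / L by apply: Rinv_lt_contravar; nra.
have : 0 < / (L + 1) by apply: Rinv_0_lt_compat; lra.
rewrite /Rdiv; nra.
Qed.
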